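(* Let $\mathcal{F}=\{i_{\alpha\beta}:\alpha\le\beta<\lambda\}$ be a complete iteration system and let $A\subseteq T(\mathcal{F})$ be an antichain such that for some $\alpha<\lambda$ the set $\{f(\alpha):f\in A\}$ is an antichain in $\mathbb{B}_\alpha$ (with $f\mapsto f(\alpha)$ injective on $A$). Then the pointwise supremum $\tilde\bigvee A$ is the supremum of $A$ in ${\sf RO}(T(\mathcal{F}))$.
   Context: A complete iteration system of length $\lambda$ (a limit ordinal) is a family $\mathcal{F}=\{i_{\alpha\beta}:\mathbb{B}_\alpha\to\mathbb{B}_\beta:\alpha\le\beta<\lambda\}$ where each $\mathbb{B}_\alpha$ is a complete Boolean algebra, $i_{\alpha\alpha}$ is the identity, each $i_{\alpha\beta}$ is a regular embedding (injective complete homomorphism) with retraction $\pi_{\alpha\beta}(c)=\bigwedge\{b: i_{\alpha\beta}(b)\ge c\}$, and $i_{\beta\gamma}\circ i_{\alpha\beta}=i_{\alpha\gamma}$. $T(\mathcal{F})$ is the set of threads $f\in\prod_{\alpha<\lambda}\mathbb{B}_\alpha$ with $\pi_{\alpha\beta}(f(\beta))=f(\alpha)$ for all $\alpha\le\beta<\lambda$, ordered pointwise (as a forcing poset the zero thread is removed). For $A\subseteq T(\mathcal{F})$ the pointwise supremum $\tilde\bigvee A$ is the thread $\alpha\mapsto\bigvee\{f(\alpha):f\in A\}$. ${\sf RO}(P)$ denotes the Boolean completion of a poset $P$, into which $P$ embeds densely. *)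

From Stdlib Require Import Classical.

Record CBA := {
  cb :> Type;
  cle : cb -> cb -> Prop;
  csup : (cb -> Prop) -> cb;
  cinf : (cb -> Prop) -> cb;
  ccompl : cb -> cb;
  cle_refl : forall x, cle x x;
  cle_trans : forall x y z, cle x y -> cle y z -> cle x z;
  cle_antisym : forall x y, cle x y -> cle y x -> x = y;
  csup_ub : forall S x, S x -> cle x (csup S);
  csup_least : forall S y, (forall x, S x -> cle x y) -> cle (csup S) y;
  cinf_lb : forall S x, S x -> cle (cinf S) x;
  cinf_greatest : forall S y, (forall x, S x -> cle y x) -> cle y (cinf S);
  cdistr : forall x y z,
    cinf (fun w => w = x \/ w = csup (fun v => v = y \/ v = z)) =
    csup (fun v => v = cinf (fun w => w = x \/ w = y) \/
                   v = cinf (fun w => w = x \/ w = z));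
  ccompl_meet : forall x,
    cinf (fun w => w = x \/ w = ccompl x) = csup (fun _ => False);
  ccompl_join : forall x,
    csup (fun w => w = x \/ w = ccompl x) = cinf (fun _ => False)
}.

Arguments cle {c}.
Arguments csup {c}.
Arguments cinf {c}.
Arguments ccompl {c}.

Definition cbot (B : CBA) : B := csup (fun _ => False).
Definition cmeet {B : CBA} (x y : B) : B := cinf (fun w => w = x \/ w = y).

Definition complete_hom {B1 B2 : CBA} (h : B1 -> B2) : Prop :=
  (forall S, h (csup S) = csup (fun y => exists x, S x /\ h x = y)) /\
  (forall S, h (cinf S) = cinf (fun y => exists x, S x /\ h x = y)) /\
  (forall x, h (ccompl x) = ccompl (h x)).

Definition regular_embedding {B1 B2 : CBA} (h : B1 -> B2) : Prop :=
  complete_hom h /\ (forall x y, h x = h y -> x = y).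

Definition retraction {B1 B2 : CBA} (h : B1 -> B2) (c : B2) : B1 :=
  cinf (fun b => cle c (h b)).

(** * Limit ordinals, represented by a well-ordered index type
    (the set of ordinals below lambda) which is nonempty and has no maximum. *)
Record LimOrd := {
  ix :> Type;
  ilt : ix -> ix -> Prop;
  ilt_irrefl : forall a, ~ ilt a a;
  ilt_trans : forall a b c, ilt a b -> ilt b c -> ilt a c;
  ilt_total : forall a b, ilt a b \/ a = b \/ ilt b a;
  ilt_wf : well_founded ilt;
  ix_inhabited : inhabited ix;
  ix_nomax : forall a, exists b, ilt a b
}.
Arguments ilt {l}.

Definition ile {L : LimOrd} (a b : L) : Prop := ilt a b \/ a = b.

Record CIS (L : LimOrd) := {
  alg : L -> CBA;
  emb : forall a b : L, alg a -> alg b;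
  emb_id : forall a (x : alg a), emb a a x = x;
  emb_reg : forall a b, ile a b -> regular_embedding (emb a b);
  emb_comp : forall a b c (x : alg a), ile a b -> ile b c ->
    emb b c (emb a b x) = emb a c x
}.
Arguments alg {L}.
Arguments emb {L}.

Definition proj {L} (F : CIS L) (a b : L) : alg F b -> alg F a :=
  retraction (emb F a b).

Definition is_thread {L} (F : CIS L) (f : forall a, alg F a) : Prop :=
  forall a b, ile a b -> proj F a b (f b) = f a.

Record thread {L} (F : CIS L) := {
  tf :> forall a, alg F a;
  tf_thread : is_thread F tf
}.
Arguments tf {L F}.

Definition tle {L} {F : CIS L} (f g : forall a, alg F a) : Prop :=
  forall a, cle (f a) (g a).

(** nonzero threads: the forcing poset T(F) minus the zero thread *)
Definition nonzero {L} {F : CIS L} (f : thread F) : Prop :=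
  exists a, f a <> cbot (alg F a).

Definition compat {L} {F : CIS L} (f : thread F) (g : forall a, alg F a) : Prop :=
  exists s : thread F, nonzero s /\ tle s f /\ tle s g.

Definition antichain {L} {F : CIS L} (A : thread F -> Prop) : Prop :=
  (forall f, A f -> nonzero f) /\
  (forall f g, A f -> A g -> f <> g -> ~ compat f g).

Definition psup {L} {F : CIS L} (A : thread F -> Prop) : forall a, alg F a :=
  fun a => csup (fun x => exists f, A f /\ tf f a = x).

(** * RO(P) for P = nonzero threads: regular open subsets (w.r.t. the
    down-set topology), ordered by inclusion, with the dense embedding
    p |-> int cl (down p). *)
Definition roset {L} (F : CIS L) := thread F -> Prop.

Definition regular_open {L} {F : CIS L} (U : roset F) : Prop :=
  forall q, U q <->
    (nonzero q /\ forall r, nonzero r -> tle r q ->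
       exists s, nonzero s /\ tle s r /\ U s).

Definition ro_emb {L} {F : CIS L} (g : forall a, alg F a) : roset F :=
  fun q => nonzero q /\ forall r, nonzero r -> tle r q -> compat r g.

Definition subset {L} {F : CIS L} (U V : roset F) : Prop := forall q, U q -> V q.

Definition is_sup_in_RO {L} {F : CIS L} (A : thread F -> Prop) (g : forall a, alg F a) : Prop :=
  regular_open (ro_emb g) /\
  (forall f, A f -> subset (ro_emb (tf f)) (ro_emb g)) /\
  (forall U, regular_open U -> (forall f, A f -> subset (ro_emb (tf f)) U) ->
     subset (ro_emb g) U).

From Stdlib Require Import Classical.

Definition cjoin {B : CBA} (x y : B) : B := csup (fun v => v = x \/ v = y).
Definition ctop (B : CBA) : B := cinf (fun _ => False).

Section LatticeFacts.
Variable B : CBA.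

Lemma bot_le (x : B) : cle (cbot B) x.
Proof. unfold cbot; apply csup_least; intros _ []. Qed.

Lemma le_bot (x : B) : cle x (cbot B) -> x = cbot B.
Proof. intros H; apply cle_antisym; auto using bot_le. Qed.

Lemma le_top (x : B) : cle x (ctop B).
Proof. unfold ctop; apply cinf_greatest; intros _ []. Qed.

Lemma meet_l (x y : B) : cle (cmeet x y) x.
Proof. apply cinf_lb; left; auto. Qed.

Lemma meet_r (x y : B) : cle (cmeet x y) y.
Proof. apply cinf_lb; right; auto. Qed.

Lemma meet_glb (z x y : B) : cle z x -> cle z y -> cle z (cmeet x y).
Proof. intros; apply cinf_greatest; intros w [-> | ->]; auto. Qed.

Lemma join_l (x y : B) : cle x (cjoin x y).
Proof. apply csup_ub; left; auto. Qed.

Lemma join_r (x y : B) : cle y (cjoin x y).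
Proof. apply csup_ub; right; auto. Qed.

Lemma join_lub (z x y : B) : cle x z -> cle y z -> cle (cjoin x y) z.
Proof. intros; apply csup_least; intros w [-> | ->]; auto. Qed.

Lemma meet_compl (x : B) : cmeet x (ccompl x) = cbot B.
Proof. apply ccompl_meet. Qed.

Lemma join_compl (x : B) : cjoin x (ccompl x) = ctop B.
Proof. apply ccompl_join. Qed.

Lemma meet_join_distr (x y z : B) :
  cmeet x (cjoin y z) = cjoin (cmeet x y) (cmeet x z).
Proof. apply cdistr. Qed.

Lemma meet_comm_le (x y : B) : cle (cmeet x y) (cmeet y x).
Proof. apply meet_glb; [apply meet_r | apply meet_l]. Qed.

Lemma meet_cancels_compl (p x : B) : cle (cmeet (cjoin p (ccompl x)) x) p.
Proof.
  eapply cle_trans; [apply meet_comm_le |].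
  rewrite meet_join_distr. apply join_lub; [apply meet_r |].
  rewrite meet_compl; apply bot_le.
Qed.

Lemma split_along (s x : B) : cle s (cjoin (cmeet x s) (ccompl x)).
Proof.
  apply cle_trans with (cmeet s (cjoin x (ccompl x))).
  - apply meet_glb; [apply cle_refl |]. rewrite join_compl; apply le_top.
  - rewrite meet_join_distr. apply join_lub.
    + eapply cle_trans; [apply meet_comm_le | apply join_l].
    + eapply cle_trans; [apply meet_r | apply join_r].
Qed.

Lemma meet_sup_distr (x : B) (S : B -> Prop) :
  cle (cmeet x (csup S)) (csup (fun v => exists s, S s /\ v = cmeet x s)).
Proof.
  set (y := csup (fun v => exists s, S s /\ v = cmeet x s)).
  assert (HS : cle (csup S) (cjoin y (ccompl x))).
  { apply csup_least; intros s Hs.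
    eapply cle_trans; [apply split_along |].
    apply join_lub; [| apply join_r].
    apply cle_trans with y; [apply csup_ub; eauto | apply join_l]. }
  apply cle_trans with (cmeet (cjoin y (ccompl x)) x).
  - apply meet_glb; [eapply cle_trans; [apply meet_r | exact HS] | apply meet_l].
  - apply meet_cancels_compl.
Qed.

End LatticeFacts.

Section Homomorphisms.
Variables B1 B2 : CBA.
Variable h : B1 -> B2.
Hypothesis hom : complete_hom h.

Lemma hom_meet (x y : B1) : h (cmeet x y) = cmeet (h x) (h y).
Proof.
  destruct hom as [_ [Hinf _]]. unfold cmeet at 1. rewrite Hinf.
  apply cle_antisym.
  - apply meet_glb; apply cinf_lb; eauto.
  - apply cinf_greatest; intros z [w [[-> | ->] <-]]; [apply meet_l | apply meet_r].
Qed.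

Lemma hom_mono (x y : B1) : cle x y -> cle (h x) (h y).
Proof.
  intros Hxy.
  assert (E : cmeet x y = x).
  { apply cle_antisym; [apply meet_l | apply meet_glb; auto using cle_refl]. }
  rewrite <- E, hom_meet. apply meet_r.
Qed.

Lemma hom_join (x y : B1) : h (cjoin x y) = cjoin (h x) (h y).
Proof.
  apply cle_antisym.
  - destruct hom as [Hsup _]. unfold cjoin at 1. rewrite Hsup.
    apply csup_least; intros z [w [[-> | ->] <-]]; [apply join_l | apply join_r].
  - apply join_lub; apply hom_mono; [apply join_l | apply join_r].
Qed.

Lemma hom_bot : h (cbot B1) = cbot B2.
Proof.
  destruct hom as [Hsup _]. unfold cbot at 1. rewrite Hsup.
  apply le_bot. apply csup_least; intros z [w [[] _]].
Qed.

(* The retraction is the lower adjoint of h:  pi c <= b  iff  c <= h b. *)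
Lemma ret_unit (c : B2) : cle c (h (retraction h c)).
Proof.
  destruct hom as [_ [Hinf _]]. unfold retraction. rewrite Hinf.
  apply cinf_greatest; intros z [w [Hw <-]]; exact Hw.
Qed.

Lemma ret_least (c : B2) (b : B1) : cle c (h b) -> cle (retraction h c) b.
Proof. intros H; apply cinf_lb; exact H. Qed.

Lemma ret_mono (c c' : B2) : cle c c' -> cle (retraction h c) (retraction h c').
Proof. intros H. apply ret_least. eapply cle_trans; [exact H | apply ret_unit]. Qed.

Lemma ret_bot : retraction h (cbot B2) = cbot B1.
Proof. apply le_bot, ret_least, bot_le. Qed.

Lemma ret_zero (c : B2) : retraction h c = cbot B1 -> c = cbot B2.
Proof.
  intros E. apply le_bot. eapply cle_trans; [apply ret_unit |].
  rewrite E, hom_bot. apply cle_refl.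
Qed.

(* Frobenius law:  pi (c /\ h x) = pi c /\ x  (uses complements). *)
Lemma ret_meet_emb (c : B2) (x : B1) :
  retraction h (cmeet c (h x)) = cmeet (retraction h c) x.
Proof.
  apply cle_antisym.
  - apply meet_glb; [apply ret_mono, meet_l | apply ret_least, meet_r].
  - set (p := retraction h (cmeet c (h x))).
    assert (Hc : cle (retraction h c) (cjoin p (ccompl x))).
    { apply ret_least. eapply cle_trans; [apply (split_along _ c (h x)) |].
      rewrite hom_join. destruct hom as [_ [_ Hcompl]]. rewrite Hcompl.
      apply join_lub; [| apply join_r].
      eapply cle_trans; [| apply join_l].
      eapply cle_trans; [apply meet_comm_le | apply ret_unit]. }
    eapply cle_trans; [| apply (meet_cancels_compl _ p x)].
    apply meet_glb; [eapply cle_trans; [apply meet_l | exact Hc] | apply meet_r].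
Qed.

End Homomorphisms.

Lemma ile_refl (L : LimOrd) (a : L) : ile a a.
Proof. right; auto. Qed.

Lemma ile_trans (L : LimOrd) (a b c : L) : ile a b -> ile b c -> ile a c.
Proof.
  intros [H1 | <-] [H2 | <-]; unfold ile; auto.
  left; eapply ilt_trans; eauto.
Qed.

Lemma ile_total (L : LimOrd) (a b : L) : ile a b \/ ile b a.
Proof. destruct (ilt_total L a b) as [H | [H | H]]; unfold ile; auto. Qed.

Section IterationSystem.
Variable L : LimOrd.
Variable F : CIS L.

Lemma emb_hom (a b : L) : ile a b -> complete_hom (emb F a b).
Proof. intros H; exact (proj1 (emb_reg L F a b H)). Qed.

Lemma proj_mono (a b : L) (c c' : alg F b) :
  ile a b -> cle c c' -> cle (proj F a b c) (proj F a b c').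
Proof. intros H; apply ret_mono, emb_hom, H. Qed.

Lemma proj_id (a : L) (c : alg F a) : proj F a a c = c.
Proof.
  unfold proj. apply cle_antisym.
  - apply ret_least. rewrite emb_id. apply cle_refl.
  - eapply cle_trans; [apply (ret_unit _ _ _ (emb_hom a a (ile_refl _ a))) |].
    rewrite emb_id. apply cle_refl.
Qed.

Lemma proj_comp (b g m : L) (c : alg F m) :
  ile b g -> ile g m -> proj F b g (proj F g m c) = proj F b m c.
Proof.
  intros Hbg Hgm. unfold proj. apply cle_antisym.
  - apply ret_least, ret_least. rewrite emb_comp by auto.
    apply ret_unit, emb_hom, (ile_trans _ _ _ _ Hbg Hgm).
  - apply ret_least. rewrite <- emb_comp with (b := g) by auto.
    eapply cle_trans; [apply (ret_unit _ _ _ (emb_hom g m Hgm)) |].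
    apply hom_mono; [apply emb_hom; auto |].
    apply ret_unit, emb_hom; auto.
Qed.

Lemma thread_zero (t : thread F) (a : L) :
  t a = cbot (alg F a) -> forall b, t b = cbot (alg F b).
Proof.
  intros E b. destruct (ile_total _ a b) as [H | H].
  - apply (ret_zero _ _ _ (emb_hom a b H)).
    change (proj F a b (t b) = cbot (alg F a)). rewrite (tf_thread _ t a b H). exact E.
  - rewrite <- (tf_thread _ t b a H), E. apply ret_bot.
Qed.

(* Pointwise suprema of threads are threads, since retractions are lower
   adjoints and hence commute with suprema. *)
Lemma psup_thread (A : thread F -> Prop) : is_thread F (psup A).
Proof.
  intros a b hab. unfold proj, psup. apply cle_antisym.
  - apply ret_least. apply csup_least; intros x [h [Hh <-]].
    eapply cle_trans; [apply (ret_unit _ _ _ (emb_hom a b hab)) |].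
    apply hom_mono; [apply emb_hom; auto |].
    change (cle (proj F a b (h b)) (csup (fun x => exists f, A f /\ tf f a = x))).
    rewrite (tf_thread _ h a b hab). apply csup_ub; eauto.
  - apply csup_least; intros x [h [Hh <-]].
    rewrite <- (tf_thread _ h a b hab). apply proj_mono; auto.
    apply csup_ub; eauto.
Qed.

Lemma psup_upper (A : thread F -> Prop) (f : thread F) : A f -> tle f (psup A).
Proof. intros Hf a. apply csup_ub; eauto. Qed.

Lemma cut_coherent (t : thread F) (alpha : L) (b : alg F alpha) (m m' : L) :
  ile alpha m -> ile m m' ->
  proj F m m' (cmeet (t m') (emb F alpha m' b)) = cmeet (t m) (emb F alpha m b).
Proof.
  intros H1 H2.
  rewrite <- (emb_comp L F alpha m m' b H1 H2).
  unfold proj. rewrite ret_meet_emb by (apply emb_hom; auto).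
  change (cmeet (proj F m m' (t m')) (emb F alpha m b) = cmeet (t m) (emb F alpha m b)).
  rewrite (tf_thread _ t m m' H2). reflexivity.
Qed.

Lemma cut_thread (t : thread F) (alpha : L) (b : alg F alpha) :
  exists s : thread F, tle s t /\
    (forall m, ile alpha m -> s m = cmeet (t m) (emb F alpha m b)) /\
    (forall be, ile be alpha -> s be = proj F be alpha (cmeet (t alpha) b)).
Proof.
  set (X := fun m => cmeet (t m) (emb F alpha m b)).
  set (sf := fun be => csup (fun x =>
              exists m, ile alpha m /\ ile be m /\ x = proj F be m (X m))).
  assert (Hsf : forall be m, ile alpha m -> ile be m -> sf be = proj F be m (X m)).
  { intros be m H1 H2. apply cle_antisym; [| apply csup_ub; exists m; auto].
    apply csup_least; intros x [m' [H1' [H2' ->]]].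
    destruct (ile_total _ m m') as [H | H].
    - unfold X. rewrite <- (cut_coherent t alpha b m m' H1 H), proj_comp by auto.
      apply cle_refl.
    - unfold X. rewrite <- (cut_coherent t alpha b m' m H1' H), proj_comp by auto.
      apply cle_refl. }
  assert (Hup : forall be, exists m, ile alpha m /\ ile be m).
  { intros be. destruct (ile_total _ alpha be) as [H | H];
      [exists be | exists alpha]; auto using ile_refl. }
  assert (Hth : is_thread F sf).
  { intros be g Hbg. destruct (Hup g) as [m [H1 H2]].
    rewrite (Hsf g m H1 H2), (Hsf be m H1 (ile_trans _ _ _ _ Hbg H2)).
    apply proj_comp; auto. }
  exists {| tf := sf; tf_thread := Hth |}; simpl. split; [| split].
  - intros be. destruct (Hup be) as [m [H1 H2]]. rewrite (Hsf be m H1 H2).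
    rewrite <- (tf_thread _ t be m H2). apply proj_mono; auto. apply meet_l.
  - intros m Hm. rewrite (Hsf m m Hm (ile_refl _ _)). apply proj_id.
  - intros be Hbe. rewrite (Hsf be alpha (ile_refl _ _) Hbe).
    unfold X. rewrite emb_id. reflexivity.
Qed.

End IterationSystem.

Section RegularOpen.
Variable L : LimOrd.
Variable F : CIS L.

Lemma tle_refl (f : forall a, alg F a) : tle f f.
Proof. intros a; apply cle_refl. Qed.

Lemma tle_trans (f g h : forall a, alg F a) : tle f g -> tle g h -> tle f h.
Proof. intros H1 H2 a; eapply cle_trans; eauto. Qed.

Lemma ro_emb_below (s : thread F) (g : forall a, alg F a) :
  nonzero s -> tle s g -> ro_emb g s.
Proof.
  intros Hs Hsg. split; auto. intros r Hr Hrs.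
  exists r; repeat split; auto using tle_refl. eapply tle_trans; eauto.
Qed.

Lemma ro_emb_mono (f g : forall a, alg F a) : tle f g -> subset (ro_emb f) (ro_emb g).
Proof.
  intros Hfg q [Hq Hall]. split; auto. intros r Hr Hrq.
  destruct (Hall r Hr Hrq) as [s [Hs [Hsr Hsf]]].
  exists s; repeat split; auto. eapply tle_trans; eauto.
Qed.

Lemma ro_emb_regular (g : forall a, alg F a) : regular_open (ro_emb g).
Proof.
  intros q; split.
  - intros [Hq Hall]. split; auto. intros r Hr Hrq.
    exists r; repeat split; auto using tle_refl.
    intros r' Hr' Hr'r. apply Hall; auto. eapply tle_trans; eauto.
  - intros [Hq Hall]. split; auto. intros r Hr Hrq.
    destruct (Hall r Hr Hrq) as [s [Hs [Hsr [_ Hsg]]]].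
    destruct (Hsg s Hs (tle_refl _)) as [u [Hu [Hus Hug]]].
    exists u; repeat split; auto. exact (tle_trans _ _ _ Hus Hsr).
Qed.

Lemma ro_emb_least (U : roset F) (g : forall a, alg F a) :
  regular_open U ->
  (forall t : thread F, nonzero t -> tle t g ->
     exists s : thread F, nonzero s /\ tle s t /\ U s) ->
  subset (ro_emb g) U.
Proof.
  intros HU Hdense q [Hq Hall]. apply HU. split; auto.
  intros r Hr Hrq.
  destruct (Hall r Hr Hrq) as [t [Ht [Htr Htg]]].
  destruct (Hdense t Ht Htg) as [s [Hs [Hst HUs]]].
  exists s; repeat split; auto. eapply tle_trans; eauto.
Qed.

End RegularOpen.

Section DisjointAtAlpha.
Variable L : LimOrd.
Variable F : CIS L.
Variable A : thread F -> Prop.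
Variable alpha : L.
Hypothesis hanti : forall f g, A f -> A g -> f <> g ->
  cmeet (tf f alpha) (tf g alpha) = cbot (alg F alpha).

Lemma meets_member (t : thread F) :
  nonzero t -> tle t (psup A) ->
  exists f, A f /\ cmeet (t alpha) (tf f alpha) <> cbot (alg F alpha).
Proof.
  intros [a Ha] Ht. apply NNPP; intros Hnone. apply Ha.
  apply (thread_zero L F t alpha). apply le_bot.
  eapply cle_trans; [apply (meet_glb _ _ _ _ (cle_refl _ _) (Ht alpha)) |].
  eapply cle_trans; [apply meet_sup_distr |].
  apply csup_least; intros v [s [[f [Hf <-]] ->]].
  destruct (classic (cmeet (t alpha) (tf f alpha) = cbot (alg F alpha))) as [E | E].
  - rewrite E; apply cle_refl.
  - exfalso; eauto.
Qed.

(* Above alpha, the part of t <= psup A lying under f(alpha) lies under f: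
   every other member of A is disjoint from f(alpha). *)
Lemma cut_below_member (t : thread F) (f : thread F) (m : L) :
  A f -> tle t (psup A) -> ile alpha m ->
  cle (cmeet (t m) (emb F alpha m (tf f alpha))) (tf f m).
Proof.
  intros Hf Ht Hm.
  pose proof (emb_hom L F alpha m Hm) as Hhom.
  eapply cle_trans.
  { apply (meet_glb _ _ (emb F alpha m (tf f alpha)) (psup A m)); [apply meet_r |].
    eapply cle_trans; [apply meet_l | apply Ht]. }
  eapply cle_trans; [apply meet_sup_distr |].
  apply csup_least; intros v [w [[h [Hh <-]] ->]].
  destruct (classic (h = f)) as [-> | Hne]; [apply meet_r |].
  assert (Hh_up : cle (tf h m) (emb F alpha m (tf h alpha))).
  { rewrite <- (tf_thread _ h alpha m Hm). apply ret_unit, Hhom. }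
  eapply cle_trans; [| apply (bot_le _ (tf f m))].
  rewrite <- (hom_bot _ _ _ Hhom), <- (hanti f h Hf Hh (fun e => Hne (eq_sym e))).
  rewrite (hom_meet _ _ _ Hhom).
  apply meet_glb; [apply meet_l | eapply cle_trans; [apply meet_r | exact Hh_up]].
Qed.

Lemma refine_into_member (t : thread F) :
  nonzero t -> tle t (psup A) ->
  exists f s, A f /\ nonzero s /\ tle s t /\ tle s (tf f).
Proof.
  intros Ht Htsup.
  destruct (meets_member t Ht Htsup) as [f [Hf Hmeet]].
  destruct (cut_thread L F t alpha (tf f alpha)) as [s [Hst [Habove Hbelow]]].
  exists f, s; repeat split; auto.
  - exists alpha. rewrite (Habove alpha (ile_refl _ _)), emb_id. exact Hmeet.
  - intros be. destruct (ile_total _ alpha be) as [H | H].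
    + rewrite (Habove be H). apply cut_below_member; auto.
    + rewrite (Hbelow be H), <- (tf_thread _ f be alpha H).
      apply proj_mono; auto. apply meet_r.
Qed.

End DisjointAtAlpha.

Theorem lemma3p8 (L : LimOrd) (F : CIS L) (A : thread F -> Prop)
  (hA : antichain A)
  (alpha : L)
  (hinj : forall f g, A f -> A g -> tf f alpha = tf g alpha -> f = g)
  (hanti : forall f g, A f -> A g -> f <> g ->
     cmeet (tf f alpha) (tf g alpha) = cbot (alg F alpha)) :
  is_thread F (psup A) /\ is_sup_in_RO A (psup A).
Proof.
  split; [apply psup_thread |].
  split; [apply ro_emb_regular |]. split.
  - intros f Hf. apply ro_emb_mono, psup_upper, Hf.
  - intros U HU Hsub. apply ro_emb_least; auto.
    intros t Ht Htsup.
    destruct (refine_into_member L F A alpha hanti t Ht Htsup)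
      as [f [s [Hf [Hs [Hst Hsf]]]]].
    exists s; repeat split; auto.
    apply (Hsub f Hf), ro_emb_below; auto.
Qed.
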